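(* If a finite simple graph $H$ has no odd cycle of length greater than $3$, then $H$ is a weak König–Egerváry graph.
   Context: A graph $H$ is a weak König–Egerváry graph if $H$ has a matching $M$ and a vertex set $Q \subseteq V(H)$ with $|Q| \leq |M|$ such that $Q$ is a vertex cover of $H - M$ (every edge of $H$ not in $M$ has an endpoint in $Q$). *)

From mathcomp Require Import all_boot.
Set Implicit Arguments. Unset Strict Implicit. Unset Printing Implicit Defensive.

Definition simple_graph (T : finType) (e : rel T) : Prop :=
  symmetric e /\ irreflexive e.

Definition is_cycle (T : finType) (e : rel T) (s : seq T) : Prop :=
  [/\ 3 <= size s, uniq s & cycle e s].

Definition is_matching (T : finType) (e : rel T) (M : {set {set T}}) : Prop :=
  (forall E, E \in M -> exists u v, e u v /\ E = [set u; v]) /\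
  (forall E F, E \in M -> F \in M -> E != F -> [disjoint E & F]).

Definition covers_minus (T : finType) (e : rel T) (M : {set {set T}})
    (Q : {set T}) : Prop :=
  forall u v, e u v -> [set u; v] \notin M -> (u \in Q) || (v \in Q).

Definition weak_KE (T : finType) (e : rel T) : Prop :=
  exists (M : {set {set T}}) (Q : {set T}),
    [/\ is_matching e M, #|Q| <= #|M| & covers_minus e M Q].

(* Fix a matching M of H with no augmenting path (it exists: augment any
   matching as long as possible).  By induction on the number of edges we find
   Q with |Q| <= |M| covering every edge outside M.
   If for some matched edge vw the matching M - vw still has no augmenting
   path in H - v, recurse on H - v and add v to Q.  Otherwise each matched edge
   vw gives an alternating path in H - v from w to a free vertex.  This yields
   a free vertex z with a matched neighbour y, matched to y', and since every
   odd cycle is a triangle, z is adjacent to y' as well.  Deleting z and the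
   edge yy' keeps M - yy' free of augmenting paths: such a path would either
   join y to y' and close an odd cycle of length >= 5 through z, or pass through
   just one of y, y' and extend through the triangle to an augmenting path of
   M.  Recurse and add z to Q. *)

From mathcomp Require Import all_boot zify.
From Stdlib Require Import Classical.
Set Implicit Arguments. Unset Strict Implicit. Unset Printing Implicit Defensive.

Section Matchings.

Variable T : finType.
Implicit Types (e : rel T) (M : {set {set T}}) (E : {set T}) (x y z : T) (s : seq T).

(** * Matchings *)

Definition matched M : rel T := fun x y => [set x; y] \in M.

Lemma set2C x y : [set x; y] = [set y; x].
Proof. by apply/setP => a; rewrite !in_set2 orbC. Qed.

Lemma matchedC M x y : matched M x y = matched M y x.
Proof. by rewrite /matched set2C. Qed.

Lemma matched_cover M x y : matched M x y -> x \in cover M.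
Proof. by move=> Mxy; apply/bigcupP; exists [set x; y]; rewrite ?set21. Qed.

Lemma matching_trivIset e M : is_matching e M -> trivIset M.
Proof. by case=> _ disjM; apply/trivIsetP => A B; exact: disjM. Qed.

Lemma matching_coverP e M x :
  is_matching e M -> reflect (exists y, matched M x y) (x \in cover M).
Proof.
case=> pairM _; apply: (iffP idP) => [/bigcupP[A MA xA]|[y /matched_cover //]].
have [u [v [_ defA]]] := pairM A MA; move: MA xA; rewrite defA.
by move=> MA /set2P[->|->]; [exists v | exists u; rewrite matchedC].
Qed.

Lemma matched_edge e M x y :
  symmetric e -> is_matching e M -> matched M x y -> e x y.
Proof.
move=> sym_e [pairM _] Mxy; have [u [v [euv defA]]] := pairM _ Mxy.
have mem_uv a : (a \in [set x; y]) = (a \in [set u; v]) by rewrite defA.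
have /set2P[xu|xv] := etrans (esym (mem_uv x)) (set21 x y);
have /set2P[yu|yv] := etrans (esym (mem_uv y)) (set22 x y); subst x y.
- by have /set2P[] := etrans (mem_uv v) (set22 u v) => vu; rewrite vu in euv.
- exact: euv.
- by rewrite sym_e.
- by have /set2P[] := etrans (mem_uv u) (set21 u v) => uv; rewrite uv in euv.
Qed.

Lemma matching_sub e e' M M' : is_matching e M -> M' \subset M ->
  (forall x y, e x y -> matched M' x y -> e' x y) -> is_matching e' M'.
Proof.
case=> pairM disjM /subsetP subM edgeM'; split=> [A M'A|A B /subM MA /subM MB].
  have [u [v [euv defA]]] := pairM A (subM A M'A).
  by exists u, v; split=> //; apply: edgeM'; rewrite /matched -?defA.
exact: disjM.
Qed.

Lemma matching_subset e M M' : is_matching e M -> M' \subset M -> is_matching e M'.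
Proof. by move=> matM subM; apply: matching_sub matM subM _. Qed.

Lemma cover_setD1 e M E : is_matching e M -> E \in M -> cover (M :\ E) = cover M :\: E.
Proof. by move/matching_trivIset; exact: coverD1. Qed.

Lemma free_setD1 e M E a : is_matching e M -> E \in M -> a \notin E ->
  (a \in cover (M :\ E)) = (a \in cover M).
Proof. by move=> matM ME aE; rewrite (cover_setD1 matM ME) inE aE. Qed.

Lemma matched_setD1_notin e M E a b : is_matching e M -> E \in M ->
  matched (M :\ E) a b -> a \notin E.
Proof.
by move=> matM ME /matched_cover; rewrite (cover_setD1 matM ME) inE => /andP[].
Qed.

Lemma matched_setD1 M E a x y :
  a \in E -> a \notin [set x; y] -> matched (M :\ E) x y = matched M x y.
Proof.
by move=> aE axy; rewrite /matched in_setD1 andb_idl // => _; apply: contraNneq axy => ->.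
Qed.

Lemma eq_in_matched_setD1 M u u' (A : seq T) : u \notin A ->
  {in A &, forall a b, matched (M :\ [set u; u']) a b = matched M a b}.
Proof.
move=> uA a b aA bA; rewrite (@matched_setD1 _ _ u) ?set21 //.
by apply/set2P => -[] eq_u; move: uA; rewrite eq_u ?aA ?bA.
Qed.

Lemma matched_setU1 M a b x y :
  a \notin [set x; y] -> matched ([set a; b] |: M) x y = matched M x y.
Proof.
move=> axy; rewrite /matched in_setU1 orb_idl // => /eqP eq_ab.
by rewrite eq_ab set21 in axy.
Qed.

Lemma cover_setU1 M A : cover (A |: M) = A :|: cover M.
Proof. by rewrite /cover bigcup_setU big_set1. Qed.

Lemma matching_setU1 e M x y : is_matching e M -> e x y ->
  x \notin cover M -> y \notin cover M -> is_matching e ([set x; y] |: M).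
Proof.
case=> pairM disjM exy xM yM.
have disj_new B : B \in M -> [disjoint [set x; y] & B].
  move=> MB; apply/pred0P => a /=; apply/andP => -[/set2P[->|->] aB].
    by move/negP: xM; apply; apply/bigcupP; exists B.
  by move/negP: yM; apply; apply/bigcupP; exists B.
split=> [A /setU1P[->|/pairM//]|A B]; first by exists x, y.
case/setU1P=> [->|MA] /setU1P[->|MB]; rewrite ?eqxx // => neqAB.
- exact: disj_new.
- by rewrite disjoint_sym; exact: disj_new.
- exact: disjM neqAB.
Qed.

Lemma card_setU1_free M x y : x \notin cover M -> #|[set x; y] |: M| = #|M|.+1.
Proof. by move=> xM; rewrite cardsU1 (contra (@matched_cover M x y) xM). Qed.

(** * Alternating and augmenting paths *)

Fixpoint alt_path e (m : rel T) (b : bool) x s : bool :=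
  if s is y :: s' then [&& e x y, m x y == b & alt_path e m (~~ b) y s'] else true.

Lemma alt_path_path e m b x s : alt_path e m b x s -> path e x s.
Proof. by elim: s b x => //= y s IHs b x /and3P[-> _ /IHs]. Qed.

Lemma alt_path_rcons e m b x s y :
  alt_path e m b x (rcons s y) =
  [&& alt_path e m b x s, e (last x s) y & m (last x s) y == b (+) odd (size s)].
Proof.
elim: s b x => [|z s IHs] b x /=; first by rewrite addbF andbT.
by rewrite IHs /= addbN addNb; case: (e x z); case: (m x z == b).
Qed.

Lemma alt_path_rev e m b x s : symmetric e -> symmetric m -> alt_path e m b x s ->
  alt_path e m (b (+) ~~ odd (size s)) (last x s) (rev (belast x s)).
Proof.
move=> sym_e sym_m; elim/last_ind: s => [|s y IHs] //=.
rewrite alt_path_rcons last_rcons belast_rcons size_rcons lastI rev_rcons /=.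
case/and3P=> /IHs alt_s exy mxy; rewrite sym_e exy sym_m negbK mxy /=.
by rewrite -addbN.
Qed.

Lemma eq_in_alt_path e e' m m' b x s :
  {in x :: s &, forall u v, e' u v -> e u v} ->
  {in x :: s &, forall u v, m' u v = m u v} ->
  alt_path e' m' b x s -> alt_path e m b x s.
Proof.
elim: s b x => //= y s IHs b x sub_e eq_m /and3P[e'xy m'xy alt_s].
have [xP yP] : x \in x :: y :: s /\ y \in x :: y :: s by rewrite !inE !eqxx !orbT.
rewrite sub_e // -eq_m // m'xy; apply: IHs alt_s => u v uP vP.
  by apply: sub_e; rewrite inE ?uP ?vP orbT.
by apply: eq_m; rewrite inE ?uP ?vP orbT.
Qed.

Definition augmenting e M x s :=
  [&& alt_path e (matched M) false x s, odd (size s), uniq (x :: s),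
      x \notin cover M & last x s \notin cover M].

Definition no_augmenting e M := forall x s, ~~ augmenting e M x s.

Lemma augmenting_rev e M x s : symmetric e ->
  augmenting e M x s -> augmenting e M (last x s) (rev (belast x s)).
Proof.
move=> sym_e /and5P[alt_s odd_s uniq_s xM lastM].
have rev_s : last x s :: rev (belast x s) = rev (x :: s) by rewrite [in RHS]lastI rev_rcons.
have last_rev : last (last x s) (rev (belast x s)) = x.
  by rewrite -[last _ _]/(last x (last x s :: _)) rev_s rev_cons last_rcons.
apply/and5P; split; rewrite ?last_rev ?rev_s ?rev_uniq ?size_rev ?size_belast //.
by have := alt_path_rev sym_e (matchedC M) alt_s; rewrite odd_s.
Qed.

Lemma augmenting_interior e M x s v :
  augmenting e M x s -> v \in s -> v != last x s -> v \in cover M.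
Proof.
case/and3P=> + + _; move: {2}(size s) (leqnn (size s)) => n.
elim: n x s => [|n IHn] x [|y [|y' s]] //= le_s.
- by move=> _ _; rewrite inE => /eqP->; rewrite eqxx.
- case/and3P=> _ _ /and3P[_ /eqP myy' alt_s]; rewrite negbK => odd_s.
  rewrite !inE => /or3P[/eqP->|/eqP->|vs] vlast.
  + exact: (@matched_cover M y y').
  + by apply: (@matched_cover M y' y); rewrite matchedC.
  + by apply: IHn alt_s _ _ vlast; rewrite // -ltnS ltnW.
Qed.

Lemma augmenting_last_neq e M x s : augmenting e M x s -> last x s != x.
Proof.
case: s => [|y s] /and5P[_ //= _ /andP[xs _] _ _].
by apply: contraNneq xs => <-; exact: mem_last.
Qed.

Lemma augmenting_reorient e M x s a : symmetric e -> augmenting e M x s ->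
  a \in x :: s -> a \notin cover M ->
  exists s', augmenting e M a s' /\ x :: s =i a :: s'.
Proof.
move=> sym_e aug_s; rewrite inE => /orP[/eqP->|a_s] aM; first by exists s.
have ->: a = last x s by apply/eqP; apply: contraNT aM; exact: augmenting_interior aug_s a_s.
exists (rev (belast x s)); split; first exact: augmenting_rev.
by move=> v; rewrite -mem_rev [in LHS]lastI rev_rcons.
Qed.

Lemma augmenting_transfer e e' M M' x s :
  {in x :: s &, forall u v, e' u v -> e u v} ->
  {in x :: s &, forall u v, matched M' u v = matched M u v} ->
  x \notin cover M -> last x s \notin cover M ->
  augmenting e' M' x s -> augmenting e M x s.
Proof.
move=> sub_e eq_m xM lastM /and5P[alt_s odd_s uniq_s _ _].
by apply/and5P; split=> //; exact: eq_in_alt_path alt_s.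
Qed.

Lemma augmenting_shift e M x y y' s :
  is_matching e M -> augmenting e M x [:: y, y' & s] ->
  [/\ is_matching e ([set x; y] |: (M :\ [set y; y'])),
      #|[set x; y] |: (M :\ [set y; y'])| = #|M|
    & augmenting e ([set x; y] |: (M :\ [set y; y'])) y' s].
Proof.
move=> matM /and5P[/= /and3P[exy /eqP mxy /and3P[_ /eqP myy' alt_s]]].
rewrite negbK => odd_s uniq_s xM lastM.
move: uniq_s; rewrite /= !inE !negb_or -!andbA.
case/and5P=> xy xy' xs yy' /and3P[ys y's uniq_s].
set E := [set y; y']; set M' := _ |: _; have ME : E \in M := myy'.
have coverE : cover (M :\ E) = cover M :\: E := cover_setD1 matM ME.
have xME : x \notin cover (M :\ E) by rewrite coverE inE negb_and xM orbT.
have yME : y \notin cover (M :\ E) by rewrite coverE inE set21.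
split.
- apply: matching_setU1 => //; exact: matching_subset matM (subD1set M E).
- by rewrite card_setU1_free // (cardsD1 E M) ME.
- have notin_pair a u v : a \notin y' :: s -> u \in y' :: s -> v \in y' :: s ->
      a \notin [set u; v].
    by move=> aP uP vP; apply/set2P => -[] eq_a; move: aP; rewrite eq_a ?uP ?vP.
  have xP : x \notin y' :: s by rewrite inE negb_or xy'.
  have yP : y \notin y' :: s by rewrite inE negb_or yy'.
  have freeM' a : a \in y' :: s -> a \notin cover (M :\ E) -> a \notin cover M'.
    move=> aP aME; rewrite cover_setU1 inE negb_or aME andbT.
    by apply/set2P => -[] eq_a; [move: xP|move: yP]; rewrite -eq_a aP.
  apply/and5P; split=> //=; rewrite ?y's //.
  + apply: eq_in_alt_path alt_s => // u v uP vP; rewrite matched_setU1 ?(notin_pair x) //.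
    by rewrite (@matched_setD1 _ _ y) ?set21 ?(notin_pair y).
  + by apply: freeM'; rewrite ?mem_head // coverE inE set22.
  + by apply: freeM'; rewrite ?mem_last // coverE inE negb_and lastM orbT.
Qed.

Lemma augment e M x s : is_matching e M -> augmenting e M x s ->
  exists M', is_matching e M' /\ #|M| < #|M'|.
Proof.
move: {2}(size s) (leqnn (size s)) => n.
elim: n M x s => [|n IHn] M x [|y [|y' s]] //= le_s matM aug_s.
- case/and5P: aug_s => /= /andP[exy _] _ _ xM yM.
  exists ([set x; y] |: M); split; first exact: matching_setU1.
  by rewrite card_setU1_free.
- have [matM' <- aug'] := augmenting_shift matM aug_s.
  by apply: IHn aug' => //; rewrite -ltnS ltnW.
Qed.

Lemma exists_no_augmenting e : exists M, is_matching e M /\ no_augmenting e M.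
Proof.
suff: forall n M, #|[set: {set T}]| - #|M| = n -> is_matching e M ->
    exists M, is_matching e M /\ no_augmenting e M.
  by move/(_ _ set0 erefl); apply; split=> A; rewrite inE.
elim/ltn_ind=> n IHn M size_M matM.
have [[x [s aug_s]]|no_aug] := classic (exists x s, augmenting e M x s); last first.
  by exists M; split=> // x s; apply/negP => aug_s; apply: no_aug; exists x, s.
have [M' [matM' lt_M]] := augment matM aug_s.
by apply: (IHn _ _ M' erefl matM'); have := subset_leq_card (subsetT M'); lia.
Qed.

(** * Deleting a vertex or an edge *)

Definition del_vertex e v : rel T := fun a b => [&& e a b, a != v & b != v].

Definition del_edge e u w : rel T := fun a b => e a b && ([set a; b] != [set u; w]).

Definition nedges e := #|[set p : T * T | e p.1 p.2]|.

Definition no_long_odd_cycle e :=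
  forall s, is_cycle e s -> odd (size s) -> size s <= 3.

Lemma del_vertex_sub e v : subrel (del_vertex e v) e.
Proof. by move=> a b /and3P[]. Qed.

Lemma del_edge_sub e u w : subrel (del_edge e u w) e.
Proof. by move=> a b /andP[]. Qed.

Lemma del_vertex_sym e v : symmetric e -> symmetric (del_vertex e v).
Proof. by move=> sym_e a b; rewrite /del_vertex sym_e [(a != v) && _]andbC. Qed.

Lemma del_edge_sym e u w : symmetric e -> symmetric (del_edge e u w).
Proof. by move=> sym_e a b; rewrite /del_edge sym_e set2C. Qed.

Lemma simple_graph_sub e e' : simple_graph e -> symmetric e' -> subrel e' e ->
  simple_graph e'.
Proof. by case=> _ irr_e sym_e' sub_e; split=> // a; apply/negP => /sub_e; rewrite irr_e. Qed.

Lemma nedges_lt e e' x y : subrel e' e -> e x y -> ~~ e' x y -> nedges e' < nedges e.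
Proof.
move=> sub_e exy e'xy; apply: proper_card; apply/properP; split.
  by apply/subsetP => p; rewrite !inE => /sub_e.
by exists (x, y); rewrite !inE.
Qed.

Lemma no_long_odd_cycle_sub e e' : subrel e' e -> no_long_odd_cycle e -> no_long_odd_cycle e'.
Proof.
by move=> sub_e noc s [size_s uniq_s cyc_s]; apply: noc; split=> //; exact: sub_cycle cyc_s.
Qed.

Lemma odd_cycle_is_triangle e a c s : no_long_odd_cycle e -> path e a s ->
  uniq (c :: a :: s) -> e c a -> e (last a s) c -> odd (size s) -> s = [:: last a s].
Proof.
move=> noc p_s uniq_s eca elast odd_s.
have: size (c :: a :: s) <= 3.
  apply: noc; rewrite /= ?negbK //; split=> //=; last by rewrite eca rcons_path p_s elast.
  by case: s odd_s {p_s uniq_s elast}.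
by case: s odd_s {p_s uniq_s elast} => [|y [|y' s]].
Qed.

Lemma path_del_vertex e v x s : path (del_vertex e v) x s -> s != [::] -> v \notin x :: s.
Proof.
elim: s x => // y s IHs x /= /andP[/and3P[_ xv yv] p_s] _.
rewrite inE negb_or eq_sym xv /=.
by case: s IHs p_s => [|y' s] IHs p_s; [rewrite inE eq_sym | exact: IHs].
Qed.

Lemma augmenting_del_vertex_notin e e' M v x s :
  subrel e' (del_vertex e v) -> augmenting e' M x s -> v \notin x :: s.
Proof.
move=> sub_e /and5P[/alt_path_path/(sub_path sub_e) p_s odd_s _ _ _].
by apply: path_del_vertex p_s _; apply: contraTneq odd_s => ->.
Qed.

Lemma matching_del_vertex e M v w : is_matching e M -> [set v; w] \in M ->
  is_matching (del_vertex e v) (M :\ [set v; w]).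
Proof.
move=> matM ME; apply: (matching_sub matM (subD1set M _)) => a b eab Mab.
have aE := matched_setD1_notin matM ME Mab; rewrite matchedC in Mab.
have bE := matched_setD1_notin matM ME Mab.
rewrite /del_vertex eab /=; apply/andP.
by split; [apply: contraNneq aE | apply: contraNneq bE] => ->; rewrite set21.
Qed.

Lemma matching_del_triangle e M z y y' : is_matching e M -> [set y; y'] \in M ->
  z \notin cover M -> is_matching (del_edge (del_vertex e z) y y') (M :\ [set y; y']).
Proof.
move=> matM ME zM; apply: (matching_sub matM (subD1set M _)) => a b eab.
rewrite /matched in_setD1 /del_edge /del_vertex eab => /andP[-> Mab] /=.
rewrite andbT; apply/andP; split; apply: contraNneq zM => <-.
  exact: (@matched_cover M a b).
by apply: (@matched_cover M b a); rewrite matchedC.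
Qed.

Lemma augmenting_lift e e' M u u' x s : is_matching e M -> [set u; u'] \in M ->
  subrel e' e -> augmenting e' (M :\ [set u; u']) x s ->
  u \notin x :: s -> u' \notin x :: s -> augmenting e M x s.
Proof.
move=> matM ME sub_e aug_s uP u'P.
have notinE a : a \in x :: s -> a \notin [set u; u'].
  by move=> aP; apply/set2P => -[] eq_a; [move: uP | move: u'P]; rewrite -eq_a aP.
have /and5P[_ _ _ xM lastM] := aug_s.
apply: (augmenting_transfer (e' := e') (M' := M :\ [set u; u'])) aug_s => //.
- by move=> a b _ _; exact: sub_e.
- exact: eq_in_matched_setD1 uP.
- by rewrite -(free_setD1 matM ME) ?notinE ?mem_head.
- by rewrite -(free_setD1 matM ME) ?notinE ?mem_last.
Qed.

Lemma augmenting_extend e e' M u u' z x s :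
  symmetric e -> symmetric e' -> subrel e' e -> is_matching e M ->
  [set u; u'] \in M -> z \notin cover M -> e z u ->
  augmenting e' (M :\ [set u; u']) x s ->
  u' \in x :: s -> u \notin x :: s -> z \notin x :: s ->
  exists s0, augmenting e M z s0.
Proof.
move=> sym_e sym_e' sub_e matM ME zM ezu aug_s u'P uP zP.
have u'ME : u' \notin cover (M :\ [set u; u']).
  by rewrite (cover_setD1 matM ME) inE set22.
have [s' [aug' eq_P]] := augmenting_reorient sym_e' aug_s u'P u'ME.
rewrite (eq_P u) in uP; rewrite (eq_P z) in zP; have last_neq := augmenting_last_neq aug'.
case/and5P: aug' => alt' odd' uniq' _ lastME.
have Muu' : matched M u u' := ME; have uM := matched_cover Muu'.
exists [:: u, u' & s']; apply/and5P; split=> //=.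
- rewrite ezu (matched_edge sym_e matM Muu') Muu' /= eqbF_neg.
  apply/andP; split; first by apply: contra zM; exact: matched_cover.
  by apply: eq_in_alt_path alt' => [a b _ _|]; [exact: sub_e | exact: eq_in_matched_setD1].
- by rewrite negbK.
- rewrite inE negb_or zP uP -cons_uniq uniq' !andbT.
  by apply: contraNneq zM => ->.
- rewrite -(free_setD1 matM ME) // !inE negb_or last_neq andbT.
  by apply: contraNneq uP => <-; exact: mem_last.
Qed.

(** * Covers of the unmatched edges *)

Definition weak_KE_pair e M (Q : {set T}) := #|Q| <= #|M| /\ covers_minus e M Q.

Lemma weak_KE_pair_lift e e' M E v Q : E \in M ->
  (forall a b, e a b -> a != v -> b != v -> [set a; b] \notin M -> e' a b) ->
  weak_KE_pair e' (M :\ E) Q -> weak_KE_pair e M (v |: Q).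
Proof.
move=> ME sub_e [cardQ covQ]; split.
  by rewrite cardsU1 (cardsD1 E M) ME; exact: leq_add (leq_b1 _) cardQ.
move=> a b eab abM; rewrite !in_setU1.
have [//|av] := eqVneq a v.
have [|bv] := eqVneq b v; first by rewrite orbT.
have abME : [set a; b] \notin M :\ E by rewrite in_setD1 negb_and abM orbT.
by case/orP: (covQ a b (sub_e a b eab av bv abM) abME) => ->; rewrite !orbT.
Qed.

(* Every matched vertex v is missed by some maximum matching: after deleting v,
   the rest of M can be augmented. *)
Definition no_essential_vertex e M := forall v w, [set v; w] \in M ->
  exists x s, augmenting (del_vertex e v) (M :\ [set v; w]) x s.

Lemma exists_free_neighbor e M a b : symmetric e -> is_matching e M ->
  no_essential_vertex e M -> e a b -> exists z y, z \notin cover M /\ e z y.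
Proof.
move=> sym_e matM aug_del eab.
have [aM|aM] := boolP (a \in cover M); last by exists a, b.
have [a' Maa'] := matching_coverP a matM aM.
have [x [s aug_s]] := aug_del a a' Maa'.
have [t [tP tME ta']] : exists t,
    [/\ t \in x :: s, t \notin cover (M :\ [set a; a']) & t != a'].
  case/and5P: (aug_s) => _ _ _ xME lastME.
  have [xa'|xa'] := eqVneq x a'; last by exists x; rewrite mem_head.
  exists (last x s); split; rewrite ?mem_last //.
  by rewrite -xa'; exact: augmenting_last_neq aug_s.
have [[|y s'] [aug' _]] := augmenting_reorient (del_vertex_sym a sym_e) aug_s tP tME.
  by case/and5P: aug'.
case/and5P: aug' => /= /and3P[/and3P[ety ta _] _ _] _ _ _ _.
by exists t, y; rewrite -(free_setD1 matM Maa') // in_set2 negb_or ta.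
Qed.

Lemma free_neighbor_triangle e M z y y' x s :
  symmetric e -> no_long_odd_cycle e -> is_matching e M -> no_augmenting e M ->
  z \notin cover M -> e z y -> [set y; y'] \in M ->
  augmenting (del_vertex e y) (M :\ [set y; y']) x s -> e z y'.
Proof.
move=> sym_e noc matM no_aug zM ezy ME aug_s.
have sym_y := del_vertex_sym y sym_e.
have sub_y := @del_vertex_sub e y.
have yP := augmenting_del_vertex_notin (fun _ _ => id) aug_s.
have [y'P|y'P] := boolP (y' \in x :: s); last first.
  by have := no_aug x s; rewrite (augmenting_lift matM ME sub_y aug_s yP y'P).
have [zP|zP] := boolP (z \in x :: s); last first.
  have [s0 aug0] := augmenting_extend sym_e sym_y sub_y matM ME zM ezy aug_s y'P yP zP.
  by have := no_aug z s0; rewrite aug0.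
have y'M : y' \in cover M by apply: (@matched_cover M y' y); rewrite matchedC.
have y'ME : y' \notin cover (M :\ [set y; y']).
  by rewrite (cover_setD1 matM ME) inE set22.
have [s' [aug' eq_P]] := augmenting_reorient sym_y aug_s y'P y'ME.
rewrite (eq_P z) in zP; rewrite (eq_P y) in yP.
have z_last : z = last y' s'.
  apply/eqP; apply: contraNT zM => z_int; move: zP; rewrite inE.
  case/orP=> [/eqP-> //|zs']; have := augmenting_interior aug' zs' z_int.
  by rewrite (cover_setD1 matM ME) inE => /andP[].
case/and5P: aug' => /alt_path_path/(sub_path sub_y) p' odd' uniq' _ _.
have uniq_ys : uniq [:: y, y' & s'] by rewrite cons_uniq yP.
have elast : e (last y' s') y by rewrite -z_last.
have := odd_cycle_is_triangle noc p' uniq_ys (matched_edge sym_e matM ME) elast odd'.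
by move=> def_s'; move: p'; rewrite def_s' /= -z_last andbT sym_e.
Qed.

Lemma no_augmenting_del_triangle e M z y y' :
  simple_graph e -> no_long_odd_cycle e -> is_matching e M -> no_augmenting e M ->
  z \notin cover M -> e z y -> e z y' -> [set y; y'] \in M ->
  no_augmenting (del_edge (del_vertex e z) y y') (M :\ [set y; y']).
Proof.
move=> [sym_e irr_e] noc matM no_aug zM ezy ezy' ME x s; apply/negP => aug_s.
set e1 := del_edge (del_vertex e z) y y' in aug_s.
have sym1 : symmetric e1 := del_edge_sym y y' (del_vertex_sym z sym_e).
have sub1 : subrel e1 e by move=> a b /del_edge_sub/del_vertex_sub.
have zP := augmenting_del_vertex_notin (@del_edge_sub _ y y') aug_s.
have extend u u' : [set u; u'] = [set y; y'] -> e z u ->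
    u' \in x :: s -> u \notin x :: s -> False.
  move=> eq_E ezu u'P uP; rewrite -eq_E in ME aug_s.
  have [s0 aug0] := augmenting_extend sym_e sym1 sub1 matM ME zM ezu aug_s u'P uP zP.
  by have := no_aug z s0; rewrite aug0.
have [yP|yP] := boolP (y \in x :: s); last first.
  have [y'P|y'P] := boolP (y' \in x :: s); first exact: (extend y y').
  by have := no_aug x s; rewrite (augmenting_lift matM ME sub1 aug_s yP y'P).
have [y'P|y'P] := boolP (y' \in x :: s); last by apply: (extend y' y) => //; exact: set2C.
have yME : y \notin cover (M :\ [set y; y']) by rewrite (cover_setD1 matM ME) inE set21.
have [s' [aug' eq_P]] := augmenting_reorient sym1 aug_s yP yME.
rewrite (eq_P y') (eq_P z) in y'P zP.
have yy' : y != y' by apply: contraTneq (matched_edge sym_e matM ME) => ->; rewrite irr_e.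
have y'_last : y' = last y s'.
  have y's' : y' \in s' by move: y'P; rewrite inE eq_sym (negbTE yy').
  apply/eqP; apply/negPn/negP => /(augmenting_interior aug' y's').
  by rewrite (cover_setD1 matM ME) inE set22.
case/and5P: aug' => /alt_path_path p' odd' uniq' _ _.
have uniq_zys : uniq [:: z, y & s'] by rewrite cons_uniq zP.
have elast : e (last y s') z by rewrite -y'_last sym_e.
have := odd_cycle_is_triangle noc (sub_path sub1 p') uniq_zys ezy elast odd'.
by move=> def_s'; move: p'; rewrite def_s' /= -y'_last /e1 /del_edge eqxx andbF.
Qed.

Lemma exists_free_triangle e M a b :
  simple_graph e -> no_long_odd_cycle e -> is_matching e M -> no_augmenting e M ->
  no_essential_vertex e M -> e a b -> exists z y y',
    [/\ z \notin cover M, e z y, e z y' & [set y; y'] \in M].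
Proof.
move=> [sym_e irr_e] noc matM no_aug aug_del eab.
have [z [y [zM ezy]]] := exists_free_neighbor sym_e matM aug_del eab.
have zy : z != y by apply: contraTneq ezy => ->; rewrite irr_e.
have yM : y \in cover M.
  apply: contraT => yM; have := no_aug z [:: y].
  by rewrite /augmenting /= ezy (contraNF (@matched_cover M z y) zM) zM yM inE zy.
have [y' Myy'] := matching_coverP y matM yM.
have [x [s aug_s]] := aug_del y y' Myy'.
exists z, y, y'; split=> //.
exact: free_neighbor_triangle sym_e noc matM no_aug zM ezy Myy' aug_s.
Qed.

Lemma weak_KE_pair_of_no_augmenting e M :
  simple_graph e -> no_long_odd_cycle e -> is_matching e M -> no_augmenting e M ->
  exists Q, weak_KE_pair e M Q.
Proof.
move Hn: (nedges e) => n; elim/ltn_ind: n e Hn M => n IHn e size_e M.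
move=> simple_e noc matM no_aug; have [sym_e _] := simple_e.
have recurse e' M' a b : subrel e' e -> symmetric e' -> e a b -> ~~ e' a b ->
    is_matching e' M' -> no_augmenting e' M' -> exists Q, weak_KE_pair e' M' Q.
  move=> sub_e sym_e' eab e'ab; apply: (IHn _ _ e' erefl).
  - by rewrite -size_e; exact: nedges_lt eab e'ab.
  - exact: simple_graph_sub simple_e sym_e' sub_e.
  - exact: no_long_odd_cycle_sub sub_e noc.
have [[v [w [ME no_aug']]]|no_ess] := classic (exists v w,
    [set v; w] \in M /\ no_augmenting (del_vertex e v) (M :\ [set v; w])).
  have not_vw : ~~ del_vertex e v v w by rewrite /del_vertex eqxx andbF.
  have [Q KE_Q] := recurse _ _ v w (@del_vertex_sub e v) (del_vertex_sym v sym_e)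
      (matched_edge sym_e matM ME) not_vw (matching_del_vertex matM ME) no_aug'.
  exists (v |: Q); apply: (weak_KE_pair_lift ME _ KE_Q) => a b eab av bv _.
  by rewrite /del_vertex eab av bv.
have aug_del : no_essential_vertex e M.
  move=> v w ME; apply: NNPP => no_path; apply: no_ess; exists v, w; split=> // x s.
  by apply/negP => aug_s; apply: no_path; exists x, s.
have [[a [b eab]]|no_edge] := classic (exists a b, e a b); last first.
  exists set0; split=> [|a b eab]; first by rewrite cards0.
  by case: no_edge; exists a, b.
have [z [y [y' [zM ezy ezy' Myy']]]] :=
  exists_free_triangle simple_e noc matM no_aug aug_del eab.
have not_zy : ~~ del_edge (del_vertex e z) y y' z y.
  by rewrite /del_edge /del_vertex eqxx /= andbF.
have sub_z : subrel (del_edge (del_vertex e z) y y') e.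
  by move=> a' b' /del_edge_sub/del_vertex_sub.
have [Q KE_Q] := recurse _ _ z y sub_z (del_edge_sym y y' (del_vertex_sym z sym_e)) ezy not_zy
    (matching_del_triangle matM Myy' zM)
    (no_augmenting_del_triangle simple_e noc matM no_aug zM ezy ezy' Myy').
exists (z |: Q); apply: (weak_KE_pair_lift Myy' _ KE_Q) => a' b' eab' az bz abM.
by rewrite /del_edge /del_vertex eab' az bz /=; apply: contraNneq abM => ->.
Qed.

End Matchings.

Theorem proposition4p8 (T : finType) (e : rel T) :
  simple_graph e ->
  (forall s : seq T, is_cycle e s -> odd (size s) -> size s <= 3) ->
  weak_KE e.
Proof.
move=> simple_e noc; have [M [matM no_aug]] := exists_no_augmenting e.
have [Q [card_Q cover_Q]] := weak_KE_pair_of_no_augmenting simple_e noc matM no_aug.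
by exists M, Q.
Qed.
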